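(* The $\varepsilon\tau$-calculi $\varepsilon\tau(\mathbf{H})$, $\varepsilon\tau(\mathbf{KC})$ and $\varepsilon\tau(\mathbf{LC})$ do not have the first $\varepsilon\tau$-theorem.
   Context: $\mathbf{H}$ is intuitionistic propositional logic; $\mathbf{KC}=\mathbf{H}+\lnot A\lor\lnot\lnot A$ (Jankov logic); $\mathbf{LC}=\mathbf{H}+(A\to B)\lor(B\to A)$ (infinite-valued Gödel logic). $\varepsilon\tau$-terms: $\varepsilon x\,A(x)$, $\tau x\,A(x)$. Critical formulas: $A(t)\to A(\varepsilon x\,A(x))$ and $A(\tau x\,A(x))\to A(t)$. $\vdash_{\varepsilon\tau(\mathbf{L})}B$: $B$ derivable in the quantifier-free first-order language with $\varepsilon\tau$-terms from critical formulas using substitution instances of theorems of $\mathbf{L}$ and modus ponens; $\vdash_{\mathbf{L}}$: the same without critical formulas. $\varepsilon\tau(\mathbf{L})$ has the first $\varepsilon\tau$-theorem if whenever $\vdash_{\varepsilon\tau(\mathbf{L})}A(e_1,\dots,e_n)$ for $\varepsilon$- or $\tau$-terms $e_i$, there are $\varepsilon\tau$-free terms $t_i^j$ with $\vdash_{\mathbf{L}}A(t_1^1,\dots,t_n^1)\lor\dots\lor A(t_1^k,\dots,t_n^k)$. *)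

(* Quantifier-free first-order language with epsilon/tau terms,
   variables as de Bruijn indices (eps/tau bind index 0). *)
From Stdlib Require Import List.
Import ListNotations.

Inductive term : Type :=
| Var : nat -> term
| Fn  : nat -> list term -> term         (* function symbol (constants: empty list) *)
| Eps : formula -> term                  (* eps x A(x), x = de Bruijn index 0 *)
| Tau : formula -> term
with formula : Type :=
| Atom : nat -> list term -> formula
| Bot  : formula
| Conj : formula -> formula -> formula
| Disj : formula -> formula -> formula
| Impl : formula -> formula -> formula.

Definition up_ren (r : nat -> nat) : nat -> nat :=
  fun n => match n with 0 => 0 | S m => S (r m) end.

Fixpoint rename_t (r : nat -> nat) (t : term) : term :=
  match t with
  | Var n => Var (r n)
  | Fn f l => Fn f (map (rename_t r) l)
  | Eps A => Eps (rename_f (up_ren r) A)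
  | Tau A => Tau (rename_f (up_ren r) A)
  end
with rename_f (r : nat -> nat) (A : formula) : formula :=
  match A with
  | Atom p l => Atom p (map (rename_t r) l)
  | Bot => Bot
  | Conj B C => Conj (rename_f r B) (rename_f r C)
  | Disj B C => Disj (rename_f r B) (rename_f r C)
  | Impl B C => Impl (rename_f r B) (rename_f r C)
  end.

Definition up_sub (s : nat -> term) : nat -> term :=
  fun n => match n with 0 => Var 0 | S m => rename_t S (s m) end.

Fixpoint subst_t (s : nat -> term) (t : term) : term :=
  match t with
  | Var n => s n
  | Fn f l => Fn f (map (subst_t s) l)
  | Eps A => Eps (subst_f (up_sub s) A)
  | Tau A => Tau (subst_f (up_sub s) A)
  end
with subst_f (s : nat -> term) (A : formula) : formula :=
  match A with
  | Atom p l => Atom p (map (subst_t s) l)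
  | Bot => Bot
  | Conj B C => Conj (subst_f s B) (subst_f s C)
  | Disj B C => Disj (subst_f s B) (subst_f s C)
  | Impl B C => Impl (subst_f s B) (subst_f s C)
  end.

(** [inst A t] = A(t), where A = A(x) has x as de Bruijn index 0. *)
Definition inst (A : formula) (t : term) : formula :=
  subst_f (fun n => match n with 0 => t | S m => Var m end) A.

(** Substitution of e_1,...,e_n for the variables 0,...,n-1. *)
Definition sub_of (es : list term) : nat -> term := fun i => nth i es (Var i).

Fixpoint etfree_t (t : term) : Prop :=
  match t with
  | Var _ => True
  | Fn _ l => (fix go (l : list term) : Prop :=
                 match l with [] => True | u :: l' => etfree_t u /\ go l' end) l
  | Eps _ => False
  | Tau _ => False
  end.

Fixpoint etfree_f (A : formula) : Prop :=
  match A with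
  | Atom _ l => Forall etfree_t l
  | Bot => True
  | Conj B C | Disj B C | Impl B C => etfree_f B /\ etfree_f C
  end.

Definition is_et_term (e : term) : Prop := exists A, e = Eps A \/ e = Tau A.

Inductive pform : Type :=
| PVar : nat -> pform
| PBot : pform
| PAnd : pform -> pform -> pform
| POr  : pform -> pform -> pform
| PImp : pform -> pform -> pform.

Definition PNeg (A : pform) : pform := PImp A PBot.

Inductive ax_H : pform -> Prop :=
| axK  A B : ax_H (PImp A (PImp B A))
| axS  A B C : ax_H (PImp (PImp A (PImp B C)) (PImp (PImp A B) (PImp A C)))
| axA1 A B : ax_H (PImp (PAnd A B) A)
| axA2 A B : ax_H (PImp (PAnd A B) B)
| axA3 A B : ax_H (PImp A (PImp B (PAnd A B)))
| axO1 A B : ax_H (PImp A (POr A B))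
| axO2 A B : ax_H (PImp B (POr A B))
| axO3 A B C : ax_H (PImp (PImp A C) (PImp (PImp B C) (PImp (POr A B) C)))
| axEFQ A : ax_H (PImp PBot A).

Inductive thm_ext (ax : pform -> Prop) : pform -> Prop :=
| th_H A : ax_H A -> thm_ext ax A
| th_ax A : ax A -> thm_ext ax A
| th_mp A B : thm_ext ax A -> thm_ext ax (PImp A B) -> thm_ext ax B.

Definition ax_none : pform -> Prop := fun _ => False.
Inductive ax_KC : pform -> Prop :=
| axKC A : ax_KC (POr (PNeg A) (PNeg (PNeg A))).
Inductive ax_LC : pform -> Prop :=
| axLC A B : ax_LC (POr (PImp A B) (PImp B A)).

Definition thm_H  : pform -> Prop := thm_ext ax_none.
Definition thm_KC : pform -> Prop := thm_ext ax_KC.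
Definition thm_LC : pform -> Prop := thm_ext ax_LC.

Fixpoint psubst (s : nat -> formula) (P : pform) : formula :=
  match P with
  | PVar n => s n
  | PBot => Bot
  | PAnd A B => Conj (psubst s A) (psubst s B)
  | POr A B => Disj (psubst s A) (psubst s B)
  | PImp A B => Impl (psubst s A) (psubst s B)
  end.

(** * Derivability
    [derives true L B]  : |-_{et(L)} B  (with critical formulas)
    [derives false L B] : |-_L B        (without critical formulas) *)
Inductive derives (crit : bool) (L : pform -> Prop) : formula -> Prop :=
| d_inst (P : pform) (s : nat -> formula) :
    L P -> derives crit L (psubst s P)
| d_crit_eps (A : formula) (t : term) :
    crit = true -> derives crit L (Impl (inst A t) (inst A (Eps A)))
| d_crit_tau (A : formula) (t : term) :
    crit = true -> derives crit L (Impl (inst A (Tau A)) (inst A t))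
| d_mp (A B : formula) :
    derives crit L A -> derives crit L (Impl A B) -> derives crit L B.

Definition bigdisj (A1 : formula) (As : list formula) : formula :=
  fold_left Disj As A1.

(** * The first epsilon-tau theorem for et(L).
    A is an et-free formula whose variables 0..n-1 play the role of x_1..x_n;
    A(e_1,...,e_n) is [subst_f (sub_of es) A]. *)
Definition first_et_theorem (L : pform -> Prop) : Prop :=
  forall (A : formula) (es : list term),
    etfree_f A ->
    Forall is_et_term es ->
    derives true L (subst_f (sub_of es) A) ->
    exists (ts1 : list term) (tss : list (list term)),
      Forall (fun ts => length ts = length es /\ Forall etfree_t ts) (ts1 :: tss) /\
      derives false L
        (bigdisj (subst_f (sub_of ts1) A) (map (fun ts => subst_f (sub_of ts) A) tss)).

(* The truth values 0 <= ... <= N with Goedel implication form a model of LC,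
   hence of KC and H.  Interpret the atom P(t) by the nesting depth of the
   unary symbol f in t (capped at N).  The formula P(f x) -> P(x) has a
   derivable epsilon-instance, the critical formula P(f e) -> P(e) with
   e = eps x P(x); but at a term t of depth d < N it takes the value d < N.
   Given finitely many eps-tau-free instances, choose N above all their depths:
   their disjunction is then not valid, so it is not derivable in LC. *)

From Stdlib Require Import List Arith Lia.
Import ListNotations.

Section GoedelChain.

Variable N : nat.

Definition gimp (a b : nat) : nat := if a <=? b then N else b.

Fixpoint pev (v : nat -> nat) (P : pform) : nat :=
  match P with
  | PVar n => v n
  | PBot => 0
  | PAnd A B => Nat.min (pev v A) (pev v B)
  | POr A B => Nat.max (pev v A) (pev v B)
  | PImp A B => gimp (pev v A) (pev v B)
  end.

Definition gvalid (P : pform) : Prop :=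
  forall v, (forall n, v n <= N) -> pev v P = N.

Ltac chain_arith :=
  unfold gimp in *;
  repeat match goal with
  | |- context [?a <=? ?b] => destruct (Nat.leb_spec a b)
  | H : context [?a <=? ?b] |- _ => destruct (Nat.leb_spec a b)
  end; lia.

Lemma pev_le v P : (forall n, v n <= N) -> pev v P <= N.
Proof. intros Hv; induction P; simpl; auto; chain_arith. Qed.

Ltac chain_valid :=
  let v := fresh "v" in let Hv := fresh "Hv" in
  intros v Hv; simpl;
  repeat match goal with
  | |- context [pev v ?X] =>
      pose proof (pev_le v X Hv); generalize dependent (pev v X); intros
  end;
  chain_arith.

Lemma ax_H_gvalid P : ax_H P -> gvalid P.
Proof. intros []; chain_valid. Qed.

Lemma ax_KC_gvalid P : ax_KC P -> gvalid P.
Proof. intros []; chain_valid. Qed.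

Lemma ax_LC_gvalid P : ax_LC P -> gvalid P.
Proof. intros []; chain_valid. Qed.

Lemma thm_ext_gvalid ax :
  (forall P, ax P -> gvalid P) -> forall P, thm_ext ax P -> gvalid P.
Proof.
  intros Hax P HP; induction HP as [P HP | P HP | A B _ IHA _ IHAB].
  - now apply ax_H_gvalid.
  - now apply Hax.
  - intros v Hv; specialize (IHA v Hv); specialize (IHAB v Hv); simpl in IHAB.
    pose proof (pev_le v B Hv); chain_arith.
Qed.

Variable I : nat -> list term -> nat.
Hypothesis I_le : forall p l, I p l <= N.

Fixpoint fev (A : formula) : nat :=
  match A with
  | Atom p l => I p l
  | Bot => 0
  | Conj B C => Nat.min (fev B) (fev C)
  | Disj B C => Nat.max (fev B) (fev C)
  | Impl B C => gimp (fev B) (fev C)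
  end.

Lemma fev_le A : fev A <= N.
Proof. induction A; simpl; auto; chain_arith. Qed.

Lemma fev_psubst s P : fev (psubst s P) = pev (fun n => fev (s n)) P.
Proof. induction P; simpl; congruence. Qed.

Lemma derives_false_sound L :
  (forall P, L P -> gvalid P) -> forall B, derives false L B -> fev B = N.
Proof.
  intros HL B HB; remember false as crit.
  induction HB as [P s HP | | | A B _ IHA _ IHAB]; try (subst; discriminate).
  - rewrite fev_psubst; apply HL; auto; intros; apply fev_le.
  - simpl in IHAB; pose proof (fev_le B); chain_arith.
Qed.

Lemma fev_bigdisj_lt A1 As :
  fev A1 < N -> Forall (fun B => fev B < N) As -> fev (bigdisj A1 As) < N.
Proof.
  unfold bigdisj; revert A1.
  induction As as [|B As IH]; intros A1 H1 HAs; simpl; auto.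
  inversion_clear HAs; apply IH; simpl; auto; lia.
Qed.

End GoedelChain.

Fixpoint f_depth (t : term) : nat :=
  match t with
  | Fn 0 [u] => S (f_depth u)
  | _ => 0
  end.

Definition depth_interp (N : nat) (p : nat) (l : list term) : nat :=
  match p, l with
  | 0, [t] => Nat.min (f_depth t) N
  | _, _ => 0
  end.

Lemma depth_interp_le N p l : depth_interp N p l <= N.
Proof. destruct p as [|], l as [|t [|]]; simpl; lia. Qed.

Definition P_at (t : term) : formula := Atom 0 [t].

Definition Pf_imp_P : formula := Impl (P_at (Fn 0 [Var 0])) (P_at (Var 0)).

Lemma derives_Pf_imp_P_eps L :
  derives true L (subst_f (sub_of [Eps (P_at (Var 0))]) Pf_imp_P).
Proof. exact (d_crit_eps true L (P_at (Var 0)) (Fn 0 [Eps (P_at (Var 0))]) eq_refl). Qed.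

Lemma fev_Pf_imp_P_lt N ts :
  f_depth (sub_of ts 0) < N ->
  fev N (depth_interp N) (subst_f (sub_of ts) Pf_imp_P) < N.
Proof.
  intros Hd; cbn -[Nat.min]; unfold sub_of in *; unfold gimp.
  match goal with |- context [?a <=? ?b] => destruct (Nat.leb_spec a b) end; lia.
Qed.

Lemma not_derives_bigdisj_Pf_imp_P L ts1 tss :
  (forall N P, L P -> gvalid N P) ->
  ~ derives false L
      (bigdisj (subst_f (sub_of ts1) Pf_imp_P)
         (map (fun ts => subst_f (sub_of ts) Pf_imp_P) tss)).
Proof.
  intros HL Hd.
  set (M := list_max (map (fun ts => f_depth (sub_of ts 0)) (ts1 :: tss))).
  assert (Hdepth : Forall (fun ts => f_depth (sub_of ts 0) < S M) (ts1 :: tss)).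
  { pose proof (proj1 (list_max_le _ M) (le_n M)) as HM; apply Forall_map in HM.
    eapply Forall_impl; [|exact HM]; simpl; intros; lia. }
  apply (derives_false_sound (S M) _ (depth_interp_le (S M))) in Hd; [|apply HL].
  inversion_clear Hdepth as [|? ? Hts1 Htss].
  enough (fev (S M) (depth_interp (S M))
            (bigdisj (subst_f (sub_of ts1) Pf_imp_P)
               (map (fun ts => subst_f (sub_of ts) Pf_imp_P) tss)) < S M) by lia.
  apply fev_bigdisj_lt, Forall_map; [now apply fev_Pf_imp_P_lt |].
  exact (Forall_impl _ (fun ts => fev_Pf_imp_P_lt (S M) ts) Htss).
Qed.

Lemma not_first_et_theorem_Goedel L :
  (forall N P, L P -> gvalid N P) -> ~ first_et_theorem L.
Proof.
  intros HL Hfirst.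
  destruct (Hfirst Pf_imp_P [Eps (P_at (Var 0))]) as [ts1 [tss [_ Hd]]].
  - repeat constructor.
  - repeat constructor; eexists; left; reflexivity.
  - apply derives_Pf_imp_P_eps.
  - exact (not_derives_bigdisj_Pf_imp_P L ts1 tss HL Hd).
Qed.

Theorem mainTheorem10 :
  ~ first_et_theorem thm_H /\ ~ first_et_theorem thm_KC /\ ~ first_et_theorem thm_LC.
Proof.
  split; [|split]; apply not_first_et_theorem_Goedel; intros N; apply thm_ext_gvalid.
  - intros P [].
  - apply ax_KC_gvalid.
  - apply ax_LC_gvalid.
Qed.
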